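(* Let $(X,d)$ be a complete metric space and $\mathcal S$ a semigroup such that the action $(\mathcal S,X)$ is strong-orbit $k$-Lipschitzian with $k<\kappa(X)$. Then either all the orbits are unbounded or there exists $x\in X$ such that $sx=x$ for all $s\in\mathcal S$.
   Context: A semigroup action is a map $\mathcal S\times X\to X$, $(s,x)\mapsto sx$, with $(st)x=s(tx)$. The orbit of $x$ is $o(x)=\{x\}\cup\{sx:s\in\mathcal S\}$; for nonempty $C\subseteq X$, $D(x,C)=\sup\{d(x,y):y\in C\}$. The action is strong-orbit $k$-Lipschitzian ($k>0$) if $D(sx,o(sy))\le k\,D(x,o(y))$ for all $s\in\mathcal S$, $x,y\in X$. $B(x,r)$ denotes the closed ball. For $c\ge1$, balls in $X$ are $c$-regular if for every $k'<c$ there are $\mu,\alpha\in(0,1)$ such that for all $x,y\in X$ and $r>0$ with $d(x,y)\ge(1-\mu)r$ there exists $z\in X$ with $B(x,(1+\mu)r)\cap B(y,k'(1+\mu)r)\subseteq B(z,\alpha r)$. The Lifschitz characteristic is $\kappa(X)=\sup\{c\ge1:\text{balls in }X\text{ are }c\text{-regular}\}$. *)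

From Stdlib Require Import Reals.
From Coquelicot Require Import Coquelicot.
Open Scope R_scope.

Definition is_metric {X : Type} (d : X -> X -> R) : Prop :=
  (forall x y, 0 <= d x y) /\
  (forall x y, d x y = 0 <-> x = y) /\
  (forall x y, d x y = d y x) /\
  (forall x y z, d x z <= d x y + d y z).

Definition metric_complete {X : Type} (d : X -> X -> R) : Prop :=
  forall u : nat -> X,
    (forall eps, 0 < eps -> exists N, forall m n, (N <= m)%nat -> (N <= n)%nat ->
        d (u m) (u n) < eps) ->
    exists l, forall eps, 0 < eps -> exists N, forall n, (N <= n)%nat -> d (u n) l < eps.

Definition is_action {S X : Type} (mul : S -> S -> S) (act : S -> X -> X) : Prop :=
  forall s t x, act (mul s t) x = act s (act t x).

Definition orbit {S X : Type} (act : S -> X -> X) (x : X) : X -> Prop :=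
  fun y => y = x \/ exists s, y = act s x.

Definition Dsup {X : Type} (d : X -> X -> R) (x : X) (C : X -> Prop) : Rbar :=
  Lub_Rbar (fun r => exists y, C y /\ r = d x y).

Definition strong_orbit_lipschitz {S X : Type} (d : X -> X -> R)
    (act : S -> X -> X) (k : R) : Prop :=
  forall s x y,
    Rbar_le (Dsup d (act s x) (orbit act (act s y)))
            (Rbar_mult k (Dsup d x (orbit act y))).

Definition bounded_set {X : Type} (d : X -> X -> R) (C : X -> Prop) : Prop :=
  exists x0 M, forall y, C y -> d x0 y <= M.

Definition balls_regular {X : Type} (d : X -> X -> R) (c : R) : Prop :=
  forall k', k' < c ->
    exists mu alpha, 0 < mu < 1 /\ 0 < alpha < 1 /\
      forall x y r, 0 < r -> d x y >= (1 - mu) * r ->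
        exists z, forall w, d x w <= (1 + mu) * r -> d y w <= k' * ((1 + mu) * r) ->
          d z w <= alpha * r.

Definition lifschitz_char {X : Type} (d : X -> X -> R) : Rbar :=
  Lub_Rbar (fun c => 1 <= c /\ balls_regular d c).

(* Starting from a bounded orbit, o(y) ⊆ B(z, r), we produce a new pair with
   o(y') ⊆ B(z', β r) and d(z, z') <= 2 r for a fixed β < 1.  Either every sz
   stays within (1 - μ) r of z, and then (z, z) already works; or some sz is
   (1 - μ) r away from z, and then o(sy) ⊆ o(y) lies in B(z, r) and, by the Lipschitz
   condition, in B(sz, k r), so the regularity of balls (k < κ(X)) puts it in a
   ball B(z', α r).  Iterating gives a Cauchy sequence of centres whose limit l
   carries orbits of arbitrarily small radius, and the Lipschitz condition then
   forces d(sl, l) = 0. *)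

From Stdlib Require Import Reals Lra Lia IndefiniteDescription Classical.
From Coquelicot Require Import Coquelicot.
Open Scope R_scope.

Lemma Dsup_le {X : Type} (d : X -> X -> R) x (C : X -> Prop) r :
  (forall w, C w -> d x w <= r) -> Rbar_le (Dsup d x C) r.
Proof.
  intros H. apply (Lub_Rbar_correct (fun r0 => exists y, C y /\ r0 = d x y)).
  intros a [y [Hy ->]]. exact (H y Hy).
Qed.

Lemma le_Dsup {X : Type} (d : X -> X -> R) x (C : X -> Prop) w :
  C w -> Rbar_le (d x w) (Dsup d x C).
Proof.
  intros H. apply (Lub_Rbar_correct (fun r0 => exists y, C y /\ r0 = d x y)). eauto.
Qed.

Lemma regular_below_lifschitz_char {X : Type} (d : X -> X -> R) (k : R) :
  Rbar_lt k (lifschitz_char d) -> exists c, k < c /\ balls_regular d c.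
Proof.
  intros Hk. apply NNPP. intros Hnone. apply (Rbar_lt_not_le _ _ Hk).
  apply (Lub_Rbar_correct (fun c => 1 <= c /\ balls_regular d c)).
  intros c [_ Hc]. simpl. apply Rnot_lt_le. intros Hkc. apply Hnone. eauto.
Qed.

Lemma iterated_choice {A : Type} (P : nat -> A -> Prop) (Q : nat -> A -> A -> Prop)
  (a0 : A) :
  P O a0 -> (forall n a, P n a -> exists a', P (S n) a' /\ Q n a a') ->
  exists u : nat -> A, forall n, P n (u n) /\ Q n (u n) (u (S n)).
Proof.
  intros H0 Hstep.
  assert (Hchoice : forall na : nat * A, exists a',
             P (fst na) (snd na) -> P (S (fst na)) a' /\ Q (fst na) (snd na) a').
  { intros [n a]. destruct (classic (P n a)) as [Hp | Hp].
    - destruct (Hstep n a Hp) as [a' Ha']. now exists a'.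
    - exists a. tauto. }
  destruct (functional_choice _ Hchoice) as [f Hf].
  pose (u := fix u n := match n with O => a0 | S n => f (n, u n) end).
  assert (HP : forall n, P n (u n)).
  { induction n as [|n IH]; [exact H0|]. exact (proj1 (Hf (n, u n) IH)). }
  exists u. intros n. split; [apply HP|]. exact (proj2 (Hf (n, u n) (HP n))).
Qed.

Lemma geometric_eventually_lt (c beta eps : R) :
  0 <= beta < 1 -> 0 < eps -> exists N, forall n, (N <= n)%nat -> c * beta ^ n < eps.
Proof.
  intros Hbeta Heps.
  assert (Hc : 0 < Rabs c + 1) by (pose proof (Rabs_pos c); lra).
  destruct (pow_lt_1_zero beta ltac:(rewrite Rabs_pos_eq; lra) (eps / (Rabs c + 1)))
    as [N HN]; [apply Rdiv_lt_0_compat; lra|].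
  exists N. intros n Hn. specialize (HN n Hn).
  assert (Hpow : 0 <= beta ^ n) by (apply pow_le; lra).
  rewrite Rabs_pos_eq in HN by exact Hpow.
  apply Rmult_lt_compat_r with (r := Rabs c + 1) in HN; [|exact Hc].
  unfold Rdiv in HN. rewrite Rmult_assoc, Rinv_l in HN by lra.
  pose proof (Rle_abs c). nra.
Qed.

Section Metric.

Context {X : Type} (d : X -> X -> R) (Hd : is_metric d).

Lemma dist_nonneg x y : 0 <= d x y.
Proof. apply Hd. Qed.

Lemma dist_eq0 x y : d x y = 0 <-> x = y.
Proof. apply Hd. Qed.

Lemma dist_self x : d x x = 0.
Proof. now apply dist_eq0. Qed.

Lemma dist_comm x y : d x y = d y x.
Proof. apply Hd. Qed.

Lemma dist_triangle x y z : d x z <= d x y + d y z.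
Proof. apply Hd. Qed.

Lemma geometric_steps_cauchy (u : nat -> X) (C beta : R) :
  0 <= beta < 1 -> (forall n, d (u n) (u (S n)) <= C * beta ^ n) ->
  forall eps, 0 < eps ->
    exists N, forall m n, (N <= m)%nat -> (N <= n)%nat -> d (u m) (u n) < eps.
Proof.
  intros Hbeta Hstep eps Heps.
  assert (HC : 0 <= C).
  { pose proof (Hstep O). pose proof (dist_nonneg (u O) (u 1%nat)). simpl in *. lra. }
  assert (Htel : forall m j,
             (1 - beta) * d (u m) (u (m + j)%nat) <= C * (beta ^ m - beta ^ (m + j))).
  { intros m j. induction j as [|j IH].
    - rewrite Nat.add_0_r, dist_self. lra.
    - rewrite Nat.add_succ_r. simpl pow.
      pose proof (Hstep (m + j)%nat).
      pose proof (dist_triangle (u m) (u (m + j)%nat) (u (S (m + j)))). nra. }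
  destruct (geometric_eventually_lt C beta (eps * (1 - beta)) Hbeta) as [N HN]; [nra|].
  assert (Hordered : forall m n, (N <= m)%nat -> (m <= n)%nat -> d (u m) (u n) < eps).
  { intros m n Hm Hmn. replace n with (m + (n - m))%nat by lia.
    pose proof (Htel m (n - m)%nat). pose proof (HN m Hm).
    assert (0 <= beta ^ (m + (n - m))) by (apply pow_le; lra). nra. }
  exists N. intros m n Hm Hn. destruct (Nat.le_ge_cases m n).
  - auto.
  - rewrite dist_comm. auto.
Qed.

End Metric.

Section Orbits.

Context {Sg X : Type} (mul : Sg -> Sg -> Sg) (act : Sg -> X -> X) (d : X -> X -> R).

Definition orbit_within (z y : X) (r : R) : Prop :=
  forall w, orbit act y w -> d z w <= r.

Lemma orbit_within_le z y r r' : r <= r' -> orbit_within z y r -> orbit_within z y r'.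
Proof. intros Hr H w Hw. specialize (H w Hw). lra. Qed.

Lemma orbit_within_act (Hact : is_action mul act) z y r s :
  orbit_within z y r -> orbit_within z (act s y) r.
Proof.
  intros H w [-> | [t ->]]; apply H; right.
  - now exists s.
  - exists (mul t s). now rewrite Hact.
Qed.

Lemma orbit_within_recenter (Hd : is_metric d) l z y r :
  orbit_within z y r -> orbit_within l y (d l z + r).
Proof.
  intros H w Hw. pose proof (H w Hw). pose proof (dist_triangle d Hd l z w). lra.
Qed.

Lemma orbit_within_lipschitz k (Hk : 0 <= k) (Hlip : strong_orbit_lipschitz d act k)
  z y r s : orbit_within z y r -> orbit_within (act s z) (act s y) (k * r).
Proof.
  intros H w Hw.
  pose proof (Hlip s z y) as Hsup.
  pose proof (Dsup_le d z (orbit act y) r H) as Hle.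
  pose proof (le_Dsup d z (orbit act y) y (or_introl eq_refl)) as Hge.
  pose proof (le_Dsup d (act s z) (orbit act (act s y)) w Hw) as Hw'.
  destruct (Dsup d z (orbit act y)) as [a| |]; simpl in Hle, Hge, Hsup; try contradiction.
  pose proof (Rbar_le_trans _ _ _ Hw' Hsup) as Hwa. simpl in Hwa.
  apply Rle_trans with (k * a); [exact Hwa|]. now apply Rmult_le_compat_l.
Qed.

Lemma bounded_orbit_within (Hd : is_metric d) x :
  bounded_set d (orbit act x) -> exists r, 0 < r /\ orbit_within x x r.
Proof.
  intros [p [M HM]].
  assert (Hx : d p x <= M) by (apply HM; now left).
  pose proof (dist_nonneg d Hd p x).
  exists (2 * M + 1). split; [lra|].
  apply orbit_within_le with (d x p + M); [rewrite (dist_comm d Hd x p); lra|].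
  now apply orbit_within_recenter with (z := p).
Qed.

Lemma fixed_of_small_orbits (Hd : is_metric d) k (Hk : 0 <= k)
  (Hlip : strong_orbit_lipschitz d act k) l :
  (forall eps, 0 < eps -> exists y, orbit_within l y eps) -> forall s, act s l = l.
Proof.
  intros Hsmall s. apply (dist_eq0 d Hd).
  assert (Hbound : forall eps, 0 < eps -> d (act s l) l <= (k + 1) * eps).
  { intros eps Heps. destruct (Hsmall eps Heps) as [y Hy].
    assert (Hsl : d (act s l) (act s y) <= k * eps)
      by (apply (orbit_within_lipschitz k Hk Hlip l y eps s Hy); now left).
    assert (Hl : d l (act s y) <= eps) by (apply Hy; right; now exists s).
    pose proof (dist_triangle d Hd (act s l) (act s y) l).
    rewrite (dist_comm d Hd (act s y) l) in *. lra. }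
  pose proof (dist_nonneg d Hd (act s l) l).
  destruct (Req_dec (d (act s l) l) 0) as [|Hne]; [assumption|].
  pose proof (Hbound (d (act s l) l / (2 * (k + 1)))
               ltac:(apply Rdiv_lt_0_compat; lra)) as Hhalf.
  replace ((k + 1) * (d (act s l) l / (2 * (k + 1)))) with (d (act s l) l / 2) in Hhalf
    by (field; lra).
  lra.
Qed.

End Orbits.

Section BoundedOrbit.

Context {Sg X : Type} (mul : Sg -> Sg -> Sg) (act : Sg -> X -> X) (d : X -> X -> R)
  (Hd : is_metric d) (Hcomplete : metric_complete d) (Hact : is_action mul act)
  (k : R) (Hk : 0 < k) (Hlip : strong_orbit_lipschitz d act k)
  (mu alpha : R) (Hmu : 0 < mu < 1) (Halpha : 0 < alpha < 1)
  (Hball : forall x y r, 0 < r -> d x y >= (1 - mu) * r ->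
     exists z, forall w, d x w <= (1 + mu) * r -> d y w <= k * ((1 + mu) * r) ->
       d z w <= alpha * r).

Let beta := Rmax alpha (1 - mu).

Lemma orbit_within_contract z y r : 0 < r -> orbit_within act d z y r ->
  exists z' y', orbit_within act d z' y' (beta * r) /\ d z z' <= 2 * r.
Proof.
  intros Hr Hzy.
  assert (Hab : alpha * r <= beta * r)
    by (apply Rmult_le_compat_r; [lra | apply Rmax_l]).
  assert (Hmb : (1 - mu) * r <= beta * r)
    by (apply Rmult_le_compat_r; [lra | apply Rmax_r]).
  destruct (classic (exists s, d z (act s z) >= (1 - mu) * r)) as [[s Hfar] | Hnear].
  - destruct (Hball z (act s z) r Hr Hfar) as [z' Hz'].
    assert (Hsy : orbit_within act d z (act s y) r) by now apply (orbit_within_act mul).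
    assert (Hsz : orbit_within act d (act s z) (act s y) (k * r))
      by exact (orbit_within_lipschitz act d k ltac:(lra) Hlip z y r s Hzy).
    assert (Hin : forall w, orbit act (act s y) w -> d z' w <= alpha * r).
    { intros w Hw. pose proof (Hsy w Hw). pose proof (Hsz w Hw).
      assert (0 <= k * (mu * r)) by (apply Rmult_le_pos; nra).
      apply Hz'; nra. }
    exists z', (act s y). split.
    + intros w Hw. pose proof (Hin w Hw). lra.
    + assert (Hself : orbit act (act s y) (act s y)) by now left.
      pose proof (Hin _ Hself). pose proof (Hsy _ Hself).
      pose proof (dist_triangle d Hd z (act s y) z').
      rewrite (dist_comm d Hd (act s y) z') in *. nra.
  - exists z, z. split.
    + intros w [-> | [t ->]].
      * rewrite (dist_self d Hd). nra.
      * assert (~ d z (act t z) >= (1 - mu) * r) by eauto. lra.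
    + rewrite (dist_self d Hd). lra.
Qed.

Lemma shrinking_orbits x r0 : 0 < r0 -> orbit_within act d x x r0 ->
  exists u : nat -> X * X, forall n,
    orbit_within act d (fst (u n)) (snd (u n)) (r0 * beta ^ n) /\
    d (fst (u n)) (fst (u (S n))) <= 2 * r0 * beta ^ n.
Proof.
  intros Hr0 Hx.
  apply (iterated_choice
           (fun n q => orbit_within act d (fst q) (snd q) (r0 * beta ^ n))
           (fun n q q' => d (fst q) (fst q') <= 2 * r0 * beta ^ n) (x, x)).
  { simpl. now rewrite Rmult_1_r. }
  intros n [z y] Hzy. simpl in Hzy |- *.
  assert (Hbeta : 0 < beta) by (apply Rlt_le_trans with alpha; [lra | apply Rmax_l]).
  destruct (orbit_within_contract z y (r0 * beta ^ n)) as [z' [y' [Hin Hstep]]];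
    [apply Rmult_lt_0_compat; [lra | now apply pow_lt] | exact Hzy |].
  exists (z', y'). simpl. split; [|lra].
  now replace (r0 * (beta * beta ^ n)) with (beta * (r0 * beta ^ n)) by ring.
Qed.

Lemma bounded_orbit_fixed_point x :
  bounded_set d (orbit act x) -> exists l, forall s, act s l = l.
Proof.
  intros Hx.
  assert (Hbeta : 0 <= beta < 1).
  { split; [apply Rle_trans with alpha; [lra | apply Rmax_l]|].
    apply Rmax_lub_lt; lra. }
  destruct (bounded_orbit_within act d Hd x Hx) as [r0 [Hr0 Hxr0]].
  destruct (shrinking_orbits x r0 Hr0 Hxr0) as [u Hu].
  destruct (Hcomplete (fun n => fst (u n))) as [l Hl].
  { apply (geometric_steps_cauchy d Hd _ (2 * r0) beta Hbeta). intros n. apply Hu. }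
  exists l. apply (fixed_of_small_orbits act d Hd k ltac:(lra) Hlip l).
  intros eps Heps.
  destruct (Hl (eps / 2) ltac:(lra)) as [N1 HN1].
  destruct (geometric_eventually_lt r0 beta (eps / 2) Hbeta ltac:(lra)) as [N2 HN2].
  pose (n := Nat.max N1 N2).
  exists (snd (u n)).
  apply orbit_within_le with (d l (fst (u n)) + r0 * beta ^ n).
  - rewrite (dist_comm d Hd).
    pose proof (HN1 n ltac:(lia)). pose proof (HN2 n ltac:(lia)). lra.
  - apply orbit_within_recenter; [exact Hd|]. apply Hu.
Qed.

End BoundedOrbit.

Theorem corollary4p2 (X : Type) (d : X -> X -> R)
  (Hmetric : is_metric d) (Hcomplete : metric_complete d)
  (S : Type) (mul : S -> S -> S)
  (Hassoc : forall s t u, mul s (mul t u) = mul (mul s t) u)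
  (act : S -> X -> X) (Hact : is_action mul act)
  (k : R) (Hk : 0 < k)
  (Hlip : strong_orbit_lipschitz d act k)
  (Hkappa : Rbar_lt (Finite k) (lifschitz_char d)) :
  (forall x, ~ bounded_set d (orbit act x)) \/
  (exists x, forall s, act s x = x).
Proof.
  destruct (classic (exists x, bounded_set d (orbit act x))) as [[x Hx] | Hunbounded].
  - right.
    destruct (regular_below_lifschitz_char d k Hkappa) as [c [Hkc Hreg]].
    destruct (Hreg k Hkc) as [mu [alpha [Hmu [Halpha Hball]]]].
    exact (bounded_orbit_fixed_point mul act d Hmetric Hcomplete Hact k Hk Hlip
             mu alpha Hmu Halpha Hball x Hx).
  - left. intros x Hx. apply Hunbounded. now exists x.
Qed.
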